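(* Let $\mathbb{F}$ be a finite field, let $m\ge 1$, and let $d\ge 0$, $d_z\ge 1$, $D\ge 0$ be integers. Let $A(\mathbf{x},z)\in\mathbb{F}[x_1,\dots,x_m,z]$ be a non-zero polynomial with $\deg_z A\le d_z$ and $(1,1,\dots,1,d)$-weighted degree at most $D$. Let $\mathbf{b}\in\mathbb{F}^m$ be such that the univariate polynomial $A(\mathbf{b},z)\in\mathbb{F}[z]$ is non-zero and has no repeated roots (in an algebraic closure of $\mathbb{F}$). Let $S\subseteq\mathbb{F}^m$ be a set of directions such that for every $\mathbf{u}\in S$ there is a univariate polynomial $P_{\mathbf{b},\mathbf{u}}(t)\in\mathbb{F}[t]$ of degree at most $d$ with $$A(\mathbf{b}+t\mathbf{u},\,P_{\mathbf{b},\mathbf{u}}(t))\equiv 0 \quad\text{in }\mathbb{F}[t].$$ If $|S|> d_z\, D\,|\mathbb{F}|^{m-1}$, then there exists a polynomial $P(\mathbf{x})\in\mathbb{F}[x_1,\dots,x_m]$ of total degree at most $d$ such that $A(\mathbf{x},P(\mathbf{x}))\equiv 0$. Moreover, there is a set $S'\subseteq S$ with $|S'|\ge |S|/d_z$ such that for every $\mathbf{u}\in S'$ we have $P(\mathbf{b}+t\mathbf{u})=P_{\mathbf{b},\mathbf{u}}(t)$ as polynomials in $t$.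
   Context: For a polynomial $g(x_1,\dots,x_n)$ and a weight vector $\mathbf{w}=(w_1,\dots,w_n)\in\mathbb{N}^n$, the $\mathbf{w}$-weighted degree of $g$ is the maximum of $w_1e_1+\cdots+w_ne_n$ over monomials $x_1^{e_1}\cdots x_n^{e_n}$ with non-zero coefficient in $g$. Here the weight is $1$ on each $x_i$ and $d$ on $z$. *)

From HB Require Import structures.
From mathcomp Require Import all_boot all_order all_algebra all_field.
From mathcomp Require Import mpoly.
Set Implicit Arguments. Unset Strict Implicit. Unset Printing Implicit Defensive.
Import GRing.Theory.
Local Open Scope ring_scope.

(* A polynomial A(x_1..x_m, z) is represented as a univariate polynomial in z
   whose coefficients are multivariate polynomials in x_1..x_m:
   A : {poly {mpoly F[m]}}, A = \sum_i A`_i(x) z^i. *)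

(* Total degree bound: deg P <= k  (msize = 1 + total degree, 0 for P = 0). *)
Definition mtotdeg_le (R : comRingType) (m k : nat) (P : {mpoly R[m]}) : Prop :=
  (msize P <= k.+1)%N.

Definition wdeg_le (R : comRingType) (m d D : nat) (A : {poly {mpoly R[m]}}) : Prop :=
  forall (i : nat) (e : 'X_{1..m}), e \in msupp A`_i -> (mdeg e + d * i <= D)%N.

Definition line_subst (R : comRingType) (m : nat) (b u : 'I_m -> R)
  (c : {mpoly R[m]}) : {poly R} :=
  mmap (@polyC R) (fun i => (b i)%:P + (u i)%:P * 'X) c.

Definition specialize_at (R : comRingType) (m : nat) (b : 'I_m -> R)
  (A : {poly {mpoly R[m]}}) : {poly R} :=
  map_poly (fun c : {mpoly R[m]} => c.@[b]) A.

Definition restrict_line (R : comRingType) (m : nat) (b u : 'I_m -> R)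
  (A : {poly {mpoly R[m]}}) (Q : {poly R}) : {poly R} :=
  (map_poly (line_subst b u) A).[Q].

From HB Require Import structures.
From mathcomp Require Import all_boot all_order all_algebra all_field.
From mathcomp Require Import mpoly.
From mathcomp Require Import zify ring.
Set Implicit Arguments. Unset Strict Implicit. Unset Printing Implicit Defensive.
Import GRing.Theory.
Local Open Scope ring_scope.

(* Group the directions of [S] by the root [P_{b,u}(0)] of [A(b, z)] they hit
   and keep the largest class [S'], of size at least [|S| / dz], with common
   simple root [z0].  Hensel lifting along the generic line [b + t x] yields
   [P] of degree at most [d] with [P(b) = z0] and
   [A(b + t x, P(b + t x)) = 0 mod t^(d+1)].  For [u] in [S'] both
   [P(b + t u)] and [P_{b,u}] are lifts of [z0] of degree at most [d], so they
   coincide by uniqueness of Hensel lifts; hence [A(x, P(x))] vanishes on every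
   line [b + t u], [u] in [S'].  The [t]-coefficients of [A(b + t x, P(b + t x))]
   have degree at most [D] and vanish on [S'], which has more than
   [D |F|^(m-1)] points, so they are zero by the Schwartz-Zippel lemma. *)

Lemma mpoly_rmorph_ext (n : nat) (R : comNzRingType) (S : pzRingType)
    (f g : {rmorphism {mpoly R[n]} -> S}) :
  (forall c, f c%:MP = g c%:MP) -> (forall i, f 'X_i = g 'X_i) -> f =1 g.
Proof.
move=> fgC fgX p; rewrite (mpolyE p) !rmorph_sum; apply: eq_bigr => e _.
rewrite -mul_mpolyC !rmorphM fgC mpolyXE_id !rmorph_prod; congr (_ * _).
by apply: eq_bigr => i _; rewrite !rmorphXn fgX.
Qed.

Section LineExpansion.
Variables (R : comNzRingType) (m : nat).

Definition mshift (c : 'I_m -> R) : {mpoly R[m]} -> {mpoly R[m]} :=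
  mmap (@mpolyC m R) (fun i => 'X_i + (c i)%:MP).

(* [radial p] is [p(t x)] and [gen_line b p] is [p(b + t x)], as polynomials
   in [t] over [R[x]]. *)
Definition radial : {mpoly R[m]} -> {poly {mpoly R[m]}} :=
  mmap (polyC \o @mpolyC m R) (fun i => ('X_i)%:P * 'X).

Definition gen_line (b : 'I_m -> R) : {mpoly R[m]} -> {poly {mpoly R[m]}} :=
  mmap (polyC \o @mpolyC m R) (fun i => ((b i)%:MP)%:P + ('X_i)%:P * 'X).

HB.instance Definition _ c :=
  GRing.RMorphism.copy (mshift c) (mmap (@mpolyC m R) (fun i => 'X_i + (c i)%:MP)).
HB.instance Definition _ :=
  GRing.RMorphism.copy radial (mmap (polyC \o @mpolyC m R) (fun i => ('X_i)%:P * 'X)).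
HB.instance Definition _ b :=
  GRing.RMorphism.copy (gen_line b)
    (mmap (polyC \o @mpolyC m R) (fun i => ((b i)%:MP)%:P + ('X_i)%:P * 'X)).
HB.instance Definition _ (b u : 'I_m -> R) :=
  GRing.RMorphism.copy (@line_subst R m b u)
    (mmap (@polyC R) (fun i => (b i)%:P + (u i)%:P * 'X)).

Lemma mshiftC c a : mshift c a%:MP = a%:MP. Proof. exact: mmapC. Qed.
Lemma mshiftX c i : mshift c 'X_i = 'X_i + (c i)%:MP.
Proof. by rewrite /mshift mmapX mmap1U. Qed.
Lemma radialC a : radial a%:MP = (a%:MP)%:P. Proof. exact: mmapC. Qed.
Lemma radialX i : radial 'X_i = ('X_i)%:P * 'X.
Proof. by rewrite /radial mmapX mmap1U. Qed.
Lemma gen_lineC b a : gen_line b a%:MP = (a%:MP)%:P. Proof. exact: mmapC. Qed.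
Lemma gen_lineX b i : gen_line b 'X_i = ((b i)%:MP)%:P + ('X_i)%:P * 'X.
Proof. by rewrite /gen_line mmapX mmap1U. Qed.
Lemma line_substC (b u : 'I_m -> R) a : line_subst b u a%:MP = a%:P.
Proof. exact: mmapC. Qed.
Lemma line_substX (b u : 'I_m -> R) i :
  line_subst b u 'X_i = (b i)%:P + (u i)%:P * 'X.
Proof. by rewrite /line_subst mmapX mmap1U. Qed.

Lemma mshift_cancel c c' : (forall i, c i + c' i = 0) -> cancel (mshift c) (mshift c').
Proof.
move=> cc' p; apply: (mpoly_rmorph_ext (f := mshift c' \o mshift c) (g := idfun)) => [a|i] /=.
  by rewrite !mshiftC.
by rewrite mshiftX rmorphD /= !mshiftX mshiftC -addrA -rmorphD /= (addrC (c' i)) cc' addr0.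
Qed.

Lemma prod_radial_monomial (e : 'X_{1..m}) :
  \prod_(i < m) (('X_i : {mpoly R[m]})%:P * 'X) ^+ e i = ('X_[e])%:P * 'X^(mdeg e).
Proof.
under eq_bigr do rewrite exprMn -rmorphXn.
by rewrite big_split /= -rmorph_prod -mpolyXE_id prodrXr mdegE.
Qed.

Lemma coef_radial p j : (radial p)`_j = pihomog mdeg j p.
Proof.
rewrite /radial /mmap pihomogE coef_sum [RHS]big_mkcond /=; apply: eq_bigr => e _.
rewrite /mmap1 prod_radial_monomial mulrA -polyCM coefMXn coefC mul_mpolyC.
case: (ltngtP j (mdeg e)) => [lt|gt|<-]; rewrite ?subnn ?eqxx //.
by rewrite ifN // subn_eq0 -ltnNge.
Qed.

Lemma radial_pihomog j p : radial (pihomog mdeg j p) = (pihomog mdeg j p)%:P * 'X^j.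
Proof.
apply/polyP => i; rewrite coef_radial coefMXn coefC.
have [<-|ne] := eqVneq i j; first by rewrite ltnn subnn pihomog_id.
rewrite eq_sym in ne; rewrite (pihomog_ne0 ne (pihomogP _ _ _)); case: ltnP => // ji.
by rewrite subn_eq0 leqNgt ltn_neqAle ji ne.
Qed.

Lemma radial_at1 p : (radial p).[1] = p.
Proof.
apply: (mpoly_rmorph_ext (f := horner_eval 1 \o radial) (g := idfun)) => [a|i] /=.
  by rewrite horner_evalE radialC hornerC.
by rewrite horner_evalE radialX hornerMX hornerC mulr1.
Qed.

Lemma gen_line_radial b p : gen_line b p = radial (mshift b p).
Proof.
apply: (mpoly_rmorph_ext (g := radial \o mshift b)) => [a|i] /=.
  by rewrite gen_lineC mshiftC radialC.
by rewrite gen_lineX mshiftX rmorphD /= radialX radialC addrC.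
Qed.

Lemma gen_line_mshiftN b p : gen_line b (mshift (fun i => - b i) p) = radial p.
Proof.
by rewrite gen_line_radial (mshift_cancel (c := fun i => - b i)) // => i; rewrite addNr.
Qed.

Lemma coef_gen_line b p j : (gen_line b p)`_j = pihomog mdeg j (mshift b p).
Proof. by rewrite gen_line_radial coef_radial. Qed.

Lemma gen_line_eq0 b p : (gen_line b p == 0) = (p == 0).
Proof.
apply/eqP/eqP => [|->]; last exact: rmorph0.
rewrite gen_line_radial => /(congr1 (horner^~ 1)); rewrite radial_at1 horner0 => bp0.
by rewrite -(@mshift_cancel b (fun i => - b i) (fun i => addrN _) p) bp0 rmorph0.
Qed.

Lemma coef0_gen_line b p : (gen_line b p)`_0 = (p.@[b])%:MP.
Proof.
rewrite -horner_coef0.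
apply: (mpoly_rmorph_ext (f := horner_eval 0 \o gen_line b) (g := @mpolyC m R \o meval b)).
  by move=> a /=; rewrite horner_evalE gen_lineC hornerC mevalC.
by move=> i /=; rewrite horner_evalE gen_lineX hornerD hornerMX !hornerC mulr0 addr0 mevalXU.
Qed.

Lemma line_subst_gen_line (b u : 'I_m -> R) p :
  line_subst b u p = map_poly (meval u) (gen_line b p).
Proof.
apply: (mpoly_rmorph_ext (g := map_poly (meval u) \o gen_line b)) => [a|i] /=.
  by rewrite line_substC gen_lineC map_polyC /= mevalC.
by rewrite line_substX gen_lineX rmorphD rmorphM /= !map_polyC map_polyX /= mevalC mevalXU.
Qed.

Lemma line_subst_at0 (b u : 'I_m -> R) p : (line_subst b u p).[0] = p.@[b].
Proof.
apply: (mpoly_rmorph_ext (f := horner_eval 0 \o line_subst b u) (g := meval b)) => [a|i] /=.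
  by rewrite horner_evalE line_substC hornerC mevalC.
by rewrite horner_evalE line_substX hornerD hornerMX !hornerC mulr0 addr0 mevalXU.
Qed.

End LineExpansion.

Section DegreeBounds.
Variables (R : idomainType) (m : nat).
Implicit Types p q : {mpoly R[m]}.

Lemma msizeM_leq p q : (msize (p * q) <= (msize p + msize q).-1)%N.
Proof.
have [->|p0] := eqVneq p 0; first by rewrite mul0r msize0.
have [->|q0] := eqVneq q 0; first by rewrite mulr0 msize0.
by rewrite msizeM.
Qed.

Lemma msizeX_leq p k : (msize (p ^+ k) <= (msize p).-1 * k + 1)%N.
Proof.
have [->|p0] := eqVneq p 0.
  by rewrite expr0n; case: (k == 0%N); rewrite ?msize1 ?msize0 /=; lia.
have := msize_poly_eq0 p; rewrite (negbTE p0).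
elim: k => [|k IH] p_gt0; first by rewrite expr0 msize1 muln0.
rewrite exprS; apply: leq_trans (msizeM_leq _ _) _; move: (IH p_gt0); lia.
Qed.

Lemma msize_prod_affine (r : seq 'I_m) (g : 'I_m -> {mpoly R[m]}) (e : 'I_m -> nat) :
  (forall i, msize (g i) <= 2)%N ->
  (msize (\prod_(i <- r) g i ^+ e i) <= (\sum_(i <- r) e i).+1)%N.
Proof.
move=> g_aff; elim: r => [|i r IH]; first by rewrite !big_nil msize1.
rewrite !big_cons; apply: leq_trans (msizeM_leq _ _) _.
have ge : ((msize (g i)).-1 * e i <= e i)%N.
  by rewrite -[leqRHS]mul1n leq_mul2r; move: (g_aff i); lia.
by move: (msizeX_leq (g i) (e i)) ge IH; move: ((msize (g i)).-1 * e i)%N => x; lia.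
Qed.

Lemma msize_mshift c p : (msize (mshift c p) <= msize p)%N.
Proof.
rewrite /mshift /mmap; apply: leq_trans (msize_sum _ _ _) _.
apply/bigmax_leqP_seq => e ep _; apply: leq_trans (msizeM_leq _ _) _.
rewrite msizeC; apply: (@leq_trans (msize (mmap1 (fun i => 'X_i + (c i)%:MP) e))).
  by case: (p@_e != 0) => /=; rewrite add0n ?leq_pred.
apply: leq_trans (msize_prod_affine _ _ _) _; last by rewrite -mdegE msize_mdeg_lt.
move=> i; apply: leq_trans (msizeD_le _ _) _.
by rewrite msizeX mdeg1 msizeC geq_max; case: (_ != 0).
Qed.

Lemma msize_pihomog j p : (msize (pihomog mdeg j p) <= j.+1)%N.
Proof.
rewrite msizeE; apply/bigmax_leqP_seq => e ep _.
by rewrite (dhomogP _ _ _ (pihomogP mdeg j p) e ep).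
Qed.

Lemma pihomog_msize_leq j p : (msize p <= j)%N -> pihomog mdeg j p = 0.
Proof.
move=> pj; rewrite pihomogE big_seq_cond big_pred0 // => e /=.
apply/negbTE; rewrite negb_and; case: (boolP (e \in msupp p)) => //= ep.
by apply: contraTneq (msize_mdeg_lt ep) => ->; rewrite -leqNgt.
Qed.

Lemma size_gen_line b p : (size (gen_line b p) <= msize p)%N.
Proof.
apply/leq_sizeP => j pj; rewrite coef_gen_line pihomog_msize_leq //.
exact: leq_trans (msize_mshift _ _) pj.
Qed.

Lemma msize_coef_gen_line b p j : (msize ((gen_line b p)`_j) <= msize p)%N.
Proof.
rewrite coef_gen_line; have [pj|jp] := leqP (msize (mshift b p)) j.
  by rewrite pihomog_msize_leq // msize0.
by apply: leq_trans (msize_pihomog _ _) _; apply: leq_trans jp (msize_mshift _ _).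
Qed.

Lemma msize_horner_wdeg d D (A : {poly {mpoly R[m]}}) p :
  wdeg_le d D A -> (msize p <= d.+1)%N -> (msize A.[p] <= D.+1)%N.
Proof.
move=> wA pd; rewrite horner_coef; apply: leq_trans (msize_sum _ _ _) _.
apply/bigmax_leqP => i _; have [->|Ai0] := eqVneq A`_i 0; first by rewrite mul0r msize0.
have di : (d * i <= D)%N by move: (wA i _ (mlead_supp Ai0)); lia.
have Ai : (msize A`_i <= (D - d * i).+1)%N.
  rewrite msizeE; apply/bigmax_leqP_seq => e ep _; move: (wA i e ep); lia.
have pi : ((msize p).-1 * i <= d * i)%N by apply: leq_mul => //; lia.
apply: leq_trans (msizeM_leq _ _) _; move: (msizeX_leq p i) Ai pi di.
by move: (d * i)%N ((msize p).-1 * i)%N (msize A`_i) (msize (p ^+ i)) => x y a c; lia.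
Qed.

End DegreeBounds.

Lemma horner_taylor2 (R : comNzRingType) (p : {poly R}) x h :
  exists r, p.[x + h] = p.[x] + h * p^`().[x] + h ^+ 2 * r.
Proof.
elim/poly_ind: p => [|p c [r IH]].
  by exists 0; rewrite deriv0 !horner0 !mulr0 !addr0.
exists (p^`().[x] + r * (x + h)).
rewrite !hornerMXaddC derivMXaddC hornerD hornerMX IH; ring.
Qed.

Lemma size_map_poly_leq (R S : nzRingType) (f : R -> S) (p : {poly R}) :
  f 0 = 0 -> (size (map_poly f p) <= size p)%N.
Proof. by move=> f0; apply/leq_sizeP => j pj; rewrite coef_map_id0 // nth_default. Qed.

Lemma dvdp_Xn_coef (K : fieldType) (p : {poly K}) n :
  (forall j, (j < n)%N -> p`_j = 0) -> 'X^n %| p.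
Proof.
move=> p_low; rewrite -(poly_take_drop n p).
have -> : take_poly n p = 0.
  by apply/polyP => j; rewrite coef_take_poly coef0; case: ifP => // /p_low.
by rewrite add0r dvdp_mull.
Qed.

Lemma card_roots_leq (K : finIdomainType) (p : {poly K}) : p != 0 ->
  (#|[set x | root p x]| <= (size p).-1)%N.
Proof.
move=> p0; rewrite cardE.
have : (size (enum [set x | root p x]) < size p)%N.
  by apply: max_poly_roots p0 _ (enum_uniq _); apply/allP => x; rewrite mem_enum inE.
by case: (size p).
Qed.

(* Uniqueness of Hensel lifts modulo [t^n]; the derivative hypothesis says that
   [f1(0)] is a simple root of [B(0, z)]. *)
Lemma hensel_unique (K : fieldType) (B : {poly {poly K}}) (f1 f2 : {poly K}) n :
  'X^n %| B.[f1] -> 'X^n %| B.[f2] -> f1.[0] = f2.[0] ->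
  ((map_poly (horner_eval 0) B)^`()).[f1.[0]] != 0 ->
  (size f1 <= n)%N -> (size f2 <= n)%N -> f1 = f2.
Proof.
move=> Bf1 Bf2 f12_0 simple f1n f2n.
have [r Br] := horner_taylor2 B f1 (f2 - f1); rewrite addrC subrK in Br.
pose H := B^`().[f1] + (f2 - f1) * r.
have BH : B.[f2] - B.[f1] = (f2 - f1) * H by rewrite Br /H; ring.
have H0 : H.[0] != 0.
  rewrite /H hornerD hornerM hornerD hornerN f12_0 subrr mul0r addr0.
  by rewrite deriv_map -[f1.[0]]/(horner_eval 0 f1) horner_map in simple.
have XnH : coprimep 'X^n H by rewrite coprimep_sym coprimep_expr // coprimepX.
have : 'X^n %| f2 - f1 by rewrite -(Gauss_dvdpl _ XnH) -BH dvdp_sub.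
apply: contraTeq; rewrite eq_sym -subr_eq0 => f21_0; apply/negP => /(dvdp_leq f21_0).
rewrite size_polyXn; apply/negP; rewrite -ltnNge ltnS.
by apply: leq_trans (size_polyD _ _) _; rewrite size_polyN geq_max f1n f2n.
Qed.

Lemma card_pair_set (T U : finType) (Q : T -> U -> bool) :
  #|[set p : T * U | Q p.1 p.2]| = (\sum_(x : T) #|[set y | Q x y]|)%N.
Proof.
rewrite -sum1_card; under [RHS]eq_bigr => x _ do rewrite -sum1_card.
rewrite (pair_big_dep xpredT (fun x y => y \in [set y | Q x y]) (fun _ _ => 1%N)) /=.
by apply: eq_bigl => p; rewrite !inE.
Qed.

Lemma coef0_horner (R : comNzRingType) (C : {poly {poly R}}) (f : {poly R}) :
  (C.[f])`_0 = (map_poly (horner_eval 0) C).[f`_0].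
Proof. by rewrite -!horner_coef0 -[f.[0]]/(horner_eval 0 f) horner_map. Qed.

Section LastVariable.
Variables (R : comNzRingType) (n : nat).
Local Notation widen := (widen_ord (leqnSn n)).

Lemma lift_max_widen (j : 'I_n) : lift ord_max j = widen j.
Proof. by apply: val_inj; rewrite /= /bump leqNgt ltn_ord. Qed.

Lemma muniX (i : 'I_n.+1) :
  muni ('X_i : {mpoly R[n.+1]}) = if unlift ord_max i is Some j then ('X_j)%:P else 'X.
Proof.
rewrite muniE msuppX big_seq1 mcoeffX eqxx scale1r.
case: unliftP => [j ->|->]; rewrite mnm1E ?lift_max_widen.
  have -> : (widen j == ord_max) = false by rewrite eqE /= ltn_eqF.
  rewrite expr0 alg_polyC; congr (_%:P); congr ('X_[_]).
  by apply/mnmP => k; rewrite !mnmE -val_eqE.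
rewrite eqxx expr1 -mul_polyC -[RHS]mul1r; congr (_ * _); congr (_%:P).
rewrite -mpolyX0; congr ('X_[_]); apply/mnmP => k; rewrite !mnmE.
by rewrite -val_eqE /= gtn_eqF.
Qed.

Lemma muniK (q : {mpoly R[n.+1]}) : (map_poly (@mwiden n R) (muni q)).['X_ord_max] = q.
Proof.
apply: (mpoly_rmorph_ext (g := idfun)
    (f := horner_eval 'X_ord_max \o map_poly (@mwiden n R) \o @muni n R)) => [c|i] /=.
  by rewrite horner_evalE muniC map_polyC /= mwidenC hornerC.
rewrite horner_evalE muniX; case: unliftP => [j ->|->].
  by rewrite map_polyC hornerC /= mwidenX mnmwiden1 lift_max_widen.
by rewrite map_polyX hornerX.
Qed.

Lemma muni_eq0 (q : {mpoly R[n.+1]}) : (muni q == 0) = (q == 0).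
Proof.
apply/eqP/eqP => [q0|->]; last exact: rmorph0.
by rewrite -(muniK q) q0 rmorph0 horner0.
Qed.

Lemma meval_muni (q : {mpoly R[n.+1]}) (u : 'I_n.+1 -> R) :
  q.@[u] = (map_poly (meval (u \o widen)) (muni q)).[u ord_max].
Proof.
apply: (mpoly_rmorph_ext (f := meval u)
    (g := horner_eval (u ord_max) \o map_poly (meval (u \o widen)) \o @muni n R)) => [c|i] /=.
  by rewrite mevalC horner_evalE muniC map_polyC /= mevalC hornerC.
rewrite mevalXU horner_evalE muniX; case: unliftP => [j ->|->].
  by rewrite map_polyC hornerC /= mevalXU lift_max_widen.
by rewrite map_polyX hornerX.
Qed.

Lemma coef_muni (q : {mpoly R[n.+1]}) j :
  (muni q)`_j =
    \sum_(e <- msupp q | e ord_max == j) q@_e *: 'X_[[multinom e (widen i) | i < n]].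
Proof.
rewrite muniE coef_sum [RHS]big_mkcond; apply: eq_bigr => e _.
by rewrite coefZ coefXn eq_sym; case: eqP; rewrite ?mulr1 ?mulr0.
Qed.

Lemma msize_coef_muni (q : {mpoly R[n.+1]}) j : (msize (muni q)`_j <= msize q - j)%N.
Proof.
rewrite coef_muni; apply: leq_trans (msize_sum _ _ _) _.
apply/bigmax_leqP_seq => e eq /eqP ej; apply: leq_trans (msizeZ_le _ _) _.
have : (mdeg [multinom e (widen i) | i < n] + e ord_max)%N = mdeg e.
  by rewrite !mdegE big_ord_recr /=; congr (_ + _)%N; apply: eq_bigr => i _; rewrite mnmE.
by rewrite msizeX; move: (msize_mdeg_lt eq); lia.
Qed.

End LastVariable.

Section SchwartzZippel.
Variable K : finIdomainType.

Definition mzero_set n (q : {mpoly K[n]}) : {set {ffun 'I_n -> K}} :=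
  [set u : {ffun 'I_n -> K} | q.@[u] == 0].

Definition poly_mzero_set n (U : {poly {mpoly K[n]}}) : {set {ffun 'I_n -> K} * K} :=
  [set p : {ffun 'I_n -> K} * K | (map_poly (meval p.1) U).[p.2] == 0].

Lemma card_poly_mzero_set n (U : {poly {mpoly K[n]}}) : U != 0 ->
  (#|poly_mzero_set U| <= #|mzero_set (lead_coef U)| * #|K| + (size U).-1 * #|K| ^ n)%N.
Proof.
move=> U0; rewrite /poly_mzero_set.
rewrite (card_pair_set (fun (u : {ffun 'I_n -> K}) x => (map_poly (meval u) U).[x] == 0)).
apply: (@leq_trans (\sum_u ((u \in mzero_set (lead_coef U)) * #|K| + (size U).-1)%N)).
  apply: leq_sum => u _; rewrite inE; have [_|lead_u] := eqVneq (lead_coef U).@[u] 0.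
    by rewrite mul1n (leq_trans (max_card _)) ?leq_addr.
  have sizeU : size (map_poly (meval u) U) = size U by apply: size_map_poly_id0.
  rewrite mul0n add0n -sizeU card_roots_leq // -size_poly_eq0 sizeU size_poly_eq0 //.
rewrite big_split /= sum_nat_const card_ffun !card_ord mulnC leq_add2r.
rewrite -big_distrl /= leq_mul // -sum1_card [leqRHS]big_mkcond.
by apply: leq_sum => u _; case: (_ \in _).
Qed.

Lemma card_mzero_set_muni n (q : {mpoly K[n.+1]}) :
  (#|mzero_set q| <= #|poly_mzero_set (muni q)|)%N.
Proof.
pose split_last (u : {ffun 'I_n.+1 -> K}) :=
  ([ffun j => u (widen_ord (leqnSn n) j)], u ord_max).
have split_inj : injective split_last.
  move=> u v [/ffunP uv uv_max]; apply/ffunP => i.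
  by case: (unliftP ord_max i) => [j ->|->] //; move: (uv j); rewrite !ffunE lift_max_widen.
rewrite -(card_imset _ split_inj); apply/subset_leq_card/subsetP => _ /imsetP[u + ->].
rewrite !inE /= (meval_muni q u) => /eqP <-; apply/eqP; congr (_.[_]).
by apply: eq_map_poly => c; apply: meval_eq => j; rewrite ffunE.
Qed.

Theorem schwartz_zippel n (q : {mpoly K[n]}) k : q != 0 -> (msize q <= k.+1)%N ->
  (#|mzero_set q| * #|K| <= k * #|K| ^ n)%N.
Proof.
elim: n q k => [|n IH] q k q0 qk.
  suff -> : mzero_set q = set0 by rewrite cards0.
  apply/setP => u; rewrite !inE -[q in q.@[u]]mpolyKC mevalC.
  by apply: contraNF q0 => /eqP q0; rewrite -(mpolyKC q) q0.
set U := muni q; set s := (size U).-1.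
have U0 : U != 0 by rewrite muni_eq0.
have lead0 : lead_coef U != 0 by rewrite lead_coef_eq0.
have lead_size : (msize (lead_coef U) <= msize q - s)%N by apply: msize_coef_muni.
have lead_pos : (0 < msize (lead_coef U))%N by rewrite lt0n msize_poly_eq0.
have IHlead := IH (lead_coef U) (k - s)%N lead0 ltac:(lia).
have sk : (s <= k)%N by lia.
rewrite expnS mulnCA mulnC leq_mul2l; apply/orP; right.
apply: leq_trans (card_mzero_set_muni q) _; apply: leq_trans (card_poly_mzero_set U0) _.
by rewrite -[in leqRHS](subnK sk) mulnDl leq_add2r.
Qed.

End SchwartzZippel.

Section HenselLifting.
Variables (F : fieldType) (m : nat) (b : 'I_m -> F) (A : {poly {mpoly F[m]}}) (z0 : F).
Local Notation Ab := (specialize_at b A).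
Local Notation B := (map_poly (gen_line b) A).
Hypothesis root_z0 : Ab.[z0] = 0.
Hypothesis simple_z0 : Ab^`().[z0] != 0.

Lemma gen_line_horner p : gen_line b A.[p] = B.[gen_line b p].
Proof. by rewrite horner_map. Qed.

Lemma map_coef0_gen_line : map_poly (horner_eval 0) B = map_poly (@mpolyC m F) Ab.
Proof.
rewrite -!map_poly_comp; apply: eq_map_poly => c /=.
by rewrite horner_evalE horner_coef0 coef0_gen_line.
Qed.

Lemma coef0_deriv_horner_gen_line p :
  p.@[b] = z0 -> ((B^`()).[gen_line b p])`_0 = (Ab^`().[z0])%:MP.
Proof.
move=> pb; rewrite coef0_horner coef0_gen_line pb -[map_poly (horner_eval 0) _]deriv_map.
by rewrite map_coef0_gen_line deriv_map horner_map.
Qed.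

Lemma hensel_lift_step k p :
    (msize p <= k.+1)%N -> p.@[b] = z0 ->
    (forall j, (j <= k)%N -> (gen_line b A.[p])`_j = 0) ->
  exists p', [/\ (msize p' <= k.+2)%N, p'.@[b] = z0 &
              forall j, (j <= k.+1)%N -> (gen_line b A.[p'])`_j = 0].
Proof.
move=> pk pb p_low; set a := Ab^`().[z0].
(* Newton step: adding [h t^(k+1)] to [p(b + t x)] shifts the [t^(k+1)]-coefficient
   of [A(b + t x, p(b + t x))] by [h * Ab'(z0)] and leaves the lower ones. *)
pose h := - a^-1 *: (gen_line b A.[p])`_k.+1.
have h_homog : pihomog mdeg k.+1 h = h.
  by rewrite /h linearZ /= coef_gen_line pihomog_id.
pose c := mshift (fun i => - b i) h.
have line_c : gen_line b c = h%:P * 'X^(k.+1).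
  by rewrite gen_line_mshiftN -h_homog radial_pihomog h_homog.
have cb : c.@[b] = 0.
  by apply/eqP; rewrite -(mpolyC_eq0 m) -coef0_gen_line line_c coefMXn /=.
exists (p + c); split.
- apply: leq_trans (msizeD_le _ _) _; rewrite geq_max (leq_trans pk) //=.
  by apply: leq_trans (msize_mshift _ _) _; rewrite -h_homog msize_pihomog.
- by rewrite mevalD pb cb addr0.
move=> j jk; rewrite gen_line_horner rmorphD /= line_c.
have [r ->] := horner_taylor2 B (gen_line b p) (h%:P * 'X^(k.+1)).
rewrite -gen_line_horner exprMn -rmorphXn -exprM mulrAC [_ * r]mulrAC !coefD !coefMXn.
rewrite (_ : (j < k.+1 * 2)%N) ?addr0; last by lia.
move: jk; rewrite leq_eqVlt => /orP[/eqP ->|jk]; last by rewrite jk p_low ?add0r.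
rewrite ltnn subnn coefCM coef0_deriv_horner_gen_line // /h mulrC mul_mpolyC.
by rewrite scalerA mulrN mulfV // scaleN1r addrN.
Qed.

Lemma hensel_lift k :
  exists p, [/\ (msize p <= k.+1)%N, p.@[b] = z0 &
             forall j, (j <= k)%N -> (gen_line b A.[p])`_j = 0].
Proof.
elim: k => [|k [p [pk pb p_low]]]; last exact: hensel_lift_step pk pb p_low.
exists z0%:MP; split; first by rewrite msizeC; case: (_ != 0).
  exact: mevalC.
move=> j; rewrite leqn0 => /eqP ->; rewrite coef0_gen_line.
by rewrite -horner_map /= mevalC root_z0.
Qed.

End HenselLifting.

Lemma card_fiber_max (T U : finType) (u0 : U) (f : T -> U) (S : {set T}) (Z : {set U}) :
  {in S, forall x, f x \in Z} -> exists z, (#|S| <= #|Z| * #|[set x in S | f x == z]|)%N.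
Proof.
move=> fSZ; have [z _ zmax] :=
  @arg_maxnP U u0 xpredT (fun z => #|[set x in S | f x == z]|) isT.
exists z; rewrite -sum1_card (partition_big f (mem Z)) //= -sum_nat_const.
apply: leq_sum => y _; apply: leq_trans (zmax y isT); rewrite -sum1_card.
by apply/eq_leq/eq_bigl => x; rewrite !inE.
Qed.

Section Lines.
Variables (F : fieldType) (m : nat) (b : 'I_m -> F) (A : {poly {mpoly F[m]}}).
Local Notation Ab := (specialize_at b A).

Lemma map_line_subst_at0 u :
  map_poly (horner_eval 0) (map_poly (line_subst b u) A) = Ab.
Proof.
rewrite -map_poly_comp; apply: eq_map_poly => c /=.
by rewrite horner_evalE line_subst_at0.
Qed.

Lemma restrict_line_at0 u (f : {poly F}) : (restrict_line b u A f).[0] = Ab.[f.[0]].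
Proof. by rewrite horner_coef0 coef0_horner map_line_subst_at0 -horner_coef0. Qed.

Lemma line_subst_horner u p :
  line_subst b u A.[p] = restrict_line b u A (line_subst b u p).
Proof. by rewrite /restrict_line horner_map. Qed.

Lemma line_subst_hensel_lift u d p (f : {poly F}) :
    (msize p <= d.+1)%N -> (forall j, (j <= d)%N -> (gen_line b A.[p])`_j = 0) ->
    (size f <= d.+1)%N -> restrict_line b u A f = 0 -> f.[0] = p.@[b] ->
    Ab^`().[p.@[b]] != 0 ->
  line_subst b u p = f.
Proof.
move=> pd p_low fd Af0 f0 simple.
apply: (@hensel_unique _ (map_poly (line_subst b u) A) _ _ d.+1).
- rewrite -/(restrict_line _ _ _ _) -line_subst_horner line_subst_gen_line.
  by apply: dvdp_Xn_coef => j jd; rewrite coef_map_id0 ?meval0 // p_low ?meval0.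
- by rewrite -/(restrict_line _ _ _ _) Af0 dvdp0.
- by rewrite line_subst_at0 f0.
- by rewrite map_line_subst_at0 line_subst_at0.
- rewrite line_subst_gen_line; apply: leq_trans (size_map_poly_leq _ (meval0 _)) _.
  exact: leq_trans (size_gen_line _ _) pd.
- exact: fd.
Qed.

End Lines.

Lemma mpoly_eq0_on_lines (K : finIdomainType) m D (q : {mpoly K[m]}) (b : 'I_m -> K)
    (S : {set {ffun 'I_m -> K}}) :
  (0 < m)%N -> (msize q <= D.+1)%N -> (D * #|K| ^ m.-1 < #|S|)%N ->
  {in S, forall u : {ffun 'I_m -> K}, line_subst b u q = 0} -> q = 0.
Proof.
move=> m0 qD Sbig qS; apply/eqP; rewrite -(gen_line_eq0 b); apply/eqP/polyP => j.
rewrite coef0; apply/eqP/negPn/negP => qj0.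
have SZ := schwartz_zippel qj0 (leq_trans (msize_coef_gen_line b q j) qD).
have : S \subset mzero_set ((gen_line b q)`_j).
  apply/subsetP => u uS; rewrite inE -coef_map_id0 ?meval0 //.
  by rewrite -line_subst_gen_line qS // coef0.
move/subset_leq_card => card_S.
have K_gt0 : (0 < #|K|)%N by apply/card_gt0P; exists 0.
have := leq_trans (leq_mul card_S (leqnn #|K|)) SZ.
have -> : (#|K| ^ m = #|K| * #|K| ^ m.-1)%N by rewrite -expnS prednK.
by rewrite mulnCA [in leqRHS]mulnC leq_pmul2r // leqNgt Sbig.
Qed.

Theorem lemma3p1 (F : finFieldType) (m d dz D : nat)
  (A : {poly {mpoly F[m]}}) (b : {ffun 'I_m -> F})
  (S : {set {ffun 'I_m -> F}}) (Pbu : {ffun 'I_m -> F} -> {poly F}) :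
  (1 <= m)%N -> (1 <= dz)%N ->
  A != 0 ->
  (size A <= dz.+1)%N ->
  wdeg_le d D A ->
  specialize_at b A != 0 ->
  separable.separable_poly (specialize_at b A) ->
  (forall u, u \in S ->
     (size (Pbu u) <= d.+1)%N /\ restrict_line b u A (Pbu u) = 0) ->
  (dz * D * #|F| ^ (m - 1) < #|S|)%N ->
  exists P : {mpoly F[m]},
    [/\ mtotdeg_le d P,
        A.[P] = 0 &
        exists S' : {set {ffun 'I_m -> F}},
          [/\ S' \subset S, (#|S| <= dz * #|S'|)%N &
              forall u, u \in S' -> line_subst b u P = Pbu u]].
Proof.
move=> m_gt0 dz_gt0 _ Adz wA Ab0 sepAb PbuS Sbig.
set Ab := specialize_at b A.
have rootsS : {in S, forall u, (Pbu u).[0] \in [set z | root Ab z]}.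
  by move=> u /PbuS[_ Au0]; rewrite inE /root -(restrict_line_at0 b A u) Au0 horner0.
have [z0 S'big] := card_fiber_max 0 rootsS; set S' := [set u in S | _] in S'big.
have {}S'big : (#|S| <= dz * #|S'|)%N.
  apply: leq_trans S'big _; rewrite leq_mul2r (leq_trans (card_roots_leq Ab0)) ?orbT //.
  by rewrite -ltnS prednK ?size_poly_gt0 // (leq_trans (size_map_poly_leq _ (meval0 _))).
have S'S : S' \subset S by apply/subsetP => u; rewrite inE => /andP[].
have [u0 u0S'] : exists u0, u0 \in S'.
  apply/card_gt0P; rewrite lt0n; apply: contraTneq S'big => ->.
  by rewrite muln0 -ltnNge (leq_ltn_trans _ Sbig).
have root_z0 : root Ab z0.
  by move: u0S'; rewrite inE => /andP[/rootsS]; rewrite inE => + /eqP <-.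
have simple_z0 : Ab^`().[z0] != 0.
  by move: sepAb; rewrite separable.separable_poly.unlock => /coprimep_root; apply.
have [P [Pd Pb P_low]] := hensel_lift (eqP root_z0) simple_z0 d.
have lineP : {in S', forall u : {ffun 'I_m -> F}, line_subst b u P = Pbu u}.
  move=> u; rewrite inE => /andP[/PbuS[Pbu_d Au0] /eqP Pbu0].
  by apply: line_subst_hensel_lift P_low Pbu_d Au0 _ _; rewrite ?Pb.
exists P; split => //; last by exists S'.
apply: (@mpoly_eq0_on_lines _ _ D _ b S') => //; first exact: msize_horner_wdeg wA Pd.
  by rewrite -(ltn_pmul2l dz_gt0) mulnA -subn1 (leq_trans Sbig).
by move=> u uS'; rewrite line_subst_horner lineP //; case/setIdP: uS' => /PbuS[].
Qed.
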